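(* Let $z_1,\dots,z_m\in\mathbb C$ and let $T$ be a spanning tree on the vertex set $\{z_1,\dots,z_m\}$ (edges being segments $e$ with endpoints $e^-,e^+$) such that for all $i,j$, $|z_i-z_j|$ is within a multiplicative constant $c\ge1$ of the length (sum of $|e^+-e^-|$ over edges) of the path in $T$ connecting $z_i$ and $z_j$. For a point $z_p$ and an edge $e$ let $d_+(z_p,e)=\max(|z_p-e^-|,|z_p-e^+|)$. Then $$\prod_{e\in T}\prod_{p=1}^m d_+(z_p,e)^{1/2}\le C\prod_{i<j}|z_i-z_j|,$$ where $C$ depends only on $m$ (and $c$). *)

From HB Require Import structures.
From mathcomp Require Import all_boot all_order all_algebra.
From mathcomp Require Import complex.
From mathcomp Require Import reals.
Set Implicit Arguments. Unset Strict Implicit. Unset Printing Implicit Defensive.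
Import Order.TTheory GRing.Theory Num.Theory.
Local Open Scope ring_scope.

Section TreeDefs.
Variable m : nat.

(* An (oriented) edge e = (e^-, e^+) is a pair of vertex indices. *)
Definition edge := ('I_m * 'I_m)%type.

Definition adj (E : seq edge) : rel 'I_m :=
  fun x y => ((x, y) \in E) || ((y, x) \in E).

Definition simple_edges (E : seq edge) : bool :=
  all (fun e => e.1 != e.2) E && uniq [seq [set e.1; e.2] | e <- E].

Definition connectedE (E : seq edge) : Prop :=
  forall x y : 'I_m, exists p : seq 'I_m, path (adj E) x p /\ last x p = y.

Definition acyclicE (E : seq edge) : Prop :=
  forall s : seq 'I_m, uniq s -> (3 <= size s)%N -> ~~ cycle (adj E) s.

Definition spanning_tree (E : seq edge) : Prop :=
  simple_edges E /\ connectedE E /\ acyclicE E.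

End TreeDefs.

Section Geom.
Variable R : realType.
Variable m : nat.
Variable z : 'I_m -> R[i].

Definition cdist (a b : R[i]) : R := Normc.normc (a - b).

Definition plen (x : 'I_m) (p : seq 'I_m) : R :=
  \sum_(d <- pairmap (fun a b => cdist (z a) (z b)) x p) d.

Definition dplus (w : R[i]) (e : edge m) : R :=
  Num.max (cdist w (z e.1)) (cdist w (z e.2)).

End Geom.

From HB Require Import structures.
From mathcomp Require Import all_boot all_order all_algebra.
From mathcomp Require Import complex.
From mathcomp Require Import reals.
Set Implicit Arguments. Unset Strict Implicit. Unset Printing Implicit Defensive.
Import Order.TTheory GRing.Theory Num.Theory.
Local Open Scope ring_scope.

(* Removing an edge e from the tree T leaves two components; let far_end e q
   be the endpoint of e lying in the component that does not contain q. The
   tree path from q to far_end e q passes through the other endpoint of e, so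
   the quasi-geodesic hypothesis gives d_+(z_q, e) <= c |z_q - z_(far_end e q)|.
   Moreover (e, q) |-> (q, far_end e q) is a bijection from T x {vertices} onto
   the ordered pairs of distinct vertices, so the left-hand side is at most
   the product of (c |z_q - z_r|)^(1/2) over ordered pairs q <> r, that is
   c^(m(m-1)/2) times the product of |z_i - z_j| over i < j. *)

Lemma map_uniq_inj_in (A B : eqType) (f : A -> B) (s : seq A) :
  uniq (map f s) -> {in s &, injective f}.
Proof.
elim: s => //= a s IHs /andP[fa_s uniq_fs] x y.
rewrite !inE => /predU1P[-> | xs] /predU1P[-> | ys] // fxy.
- by move: fa_s; rewrite fxy map_f.
- by move: fa_s; rewrite -fxy map_f.
- exact: IHs.
Qed.

Lemma connect_sub_avoid (V : finType) (e1 e2 : rel V) (r x y : V) :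
  {in predC1 r &, subrel e1 e2} -> ~~ connect e1 x r ->
  connect e1 x y -> connect e2 x y.
Proof.
move=> sub12 xNr /connectP[p xp ->]; apply/connectP; exists p => //.
apply: (sub_in_path sub12 _ xp); apply/allP => v /(path_connect xp) xv /=.
by apply: contraNneq xNr => <-.
Qed.

Lemma adj_sym m (E : seq (edge m)) : symmetric (adj E).
Proof. by move=> x y; rewrite /adj orbC. Qed.

Section SpanningTree.
Variables (m : nat) (T : seq (edge m)).

Definition ends (e : edge m) : {set 'I_m} := [set e.1; e.2].

Definition drop_edge (e : edge m) := [seq f <- T | ends f != ends e].

Lemma sub_adj_drop_edge e : subrel (adj (drop_edge e)) (adj T).
Proof.
by move=> x y; rewrite /adj !mem_filter => /orP[]/andP[_ ->]; rewrite ?orbT.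
Qed.

Lemma adj_drop_edge e r x y : r \in ends e -> x != r -> y != r ->
  adj T x y -> adj (drop_edge e) x y.
Proof.
move=> r_e xr yr; rewrite /adj !mem_filter.
suff ends_xy u v : u != r -> v != r -> ends (u, v) != ends e by rewrite !ends_xy.
move=> ur vr; apply: contraTneq r_e => <-.
by rewrite !inE negb_or ![r == _]eq_sym ur vr.
Qed.

Lemma adj_drop_edgeN e x y :
  adj T x y -> ~~ adj (drop_edge e) x y -> x \in ends e.
Proof.
rewrite /adj !mem_filter negb_or => /orP[] xyT; rewrite xyT andbT => /andP[].
- by move=> /negPn/eqP <- _; rewrite !inE eqxx.
- by move=> _ /negPn/eqP <-; rewrite !inE eqxx orbT.
Qed.

Hypothesis tree : spanning_tree T.

Lemma uniq_tree : uniq T.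
Proof. by case: tree => /andP[_ /map_uniq]. Qed.

Lemma drop_edge_disconnects e :
  e \in T -> ~~ connect (adj (drop_edge e)) e.1 e.2.
Proof.
case: tree => /andP[loopless _] [_ acyclic] eT.
apply/negP => /connectP[p0 p0_path e2_last]; move: e2_last.
case: (shortenP p0_path) => p p_path p_uniq _.
(* a shortest path from e.1 to e.2 avoiding e closes a cycle with e *)
case: p p_path p_uniq => [|y [|y' p]] p_path p_uniq /=.
- by move=> e_loop; move: (allP loopless e eT); rewrite e_loop eqxx.
- move=> e2y; move: p_path; rewrite -e2y /= andbT /adj !mem_filter /ends /=.
  by rewrite setUC eqxx.
- move=> e2_last; apply/negP: (acyclic _ p_uniq isT); apply/negPn.
  rewrite /cycle rcons_path (sub_path (@sub_adj_drop_edge e) p_path) /=.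
  by rewrite -e2_last /adj -surjective_pairing eT orbT.
Qed.

Lemma drop_edge_connect_ends e q :
  connect (adj (drop_edge e)) q e.1 || connect (adj (drop_edge e)) q e.2.
Proof.
case: tree => _ [connected _]; have [p [p_path p_last]] := connected q e.1.
elim: p q p_path p_last => [|x p IHp] q /=; first by move=> _ ->; rewrite connect0.
move=> /andP[qx x_path] p_last; have [qx' | qNx] := boolP (adj (drop_edge e) q x).
  have /orP[] := IHp x x_path p_last => /(connect_trans (connect1 qx')) ->.
    by [].
  by rewrite orbT.
by move: (adj_drop_edgeN qx qNx); rewrite !inE => /orP[]/eqP->; rewrite connect0 ?orbT.
Qed.

Definition near_end e q := if connect (adj (drop_edge e)) q e.1 then e.1 else e.2.
Definition far_end e q := if connect (adj (drop_edge e)) q e.1 then e.2 else e.1.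

Lemma ends_near_far e q : ends e = [set near_end e q; far_end e q].
Proof. by rewrite /near_end /far_end /ends; case: ifP; rewrite // setUC. Qed.

Lemma far_end_in_ends e q : far_end e q \in ends e.
Proof. by rewrite (ends_near_far e q) !inE eqxx orbT. Qed.

Lemma connect_near_end e q : connect (adj (drop_edge e)) q (near_end e q).
Proof.
rewrite /near_end; case: ifP => // qNe1.
by move: (drop_edge_connect_ends e q); rewrite qNe1.
Qed.

Lemma connect_far_endN e q :
  e \in T -> ~~ connect (adj (drop_edge e)) q (far_end e q).
Proof.
move=> eT; rewrite /far_end; case: ifP => [q_e1 | /negbT //].
apply: contra (drop_edge_disconnects eT) => q_e2; apply: connect_trans q_e2.
by rewrite (sym_connect_sym (@adj_sym _ _)).
Qed.

Lemma near_far_neq e q : e \in T -> near_end e q != far_end e q.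
Proof.
by move=> eT; apply: contraNneq (connect_far_endN q eT) => <-; apply: connect_near_end.
Qed.

Lemma adj_near_far e q : e \in T -> adj T (near_end e q) (far_end e q).
Proof.
by case: e => a b abT; rewrite /near_end /far_end /adj /=; case: ifP; rewrite abT ?orbT.
Qed.

Lemma far_end_inj q : {in T &, injective (far_end ^~ q)}.
Proof.
move=> e e' eT e'T /= far_ee'; have [/andP[_ uniq_ends] _] := tree.
apply: (@map_uniq_inj_in _ _ ends T uniq_ends _ _ eT e'T).
rewrite /= (ends_near_far e q) (ends_near_far e' q) far_ee'; congr [set _; _].
have [// | near_neq] := eqVneq (near_end e q) (near_end e' q).
(* Otherwise the path from q to near_end e' q avoids far_end e' q, an end of
   e, so together with e' it joins q to far_end e q in T minus e. *)
have r_e : far_end e' q \in ends e by rewrite -far_ee' far_end_in_ends.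
have s_e : near_end e q \in ends e by rewrite (ends_near_far e q) !inE eqxx.
have drop_e'_e :
    {in predC1 (far_end e' q) &, subrel (adj (drop_edge e')) (adj (drop_edge e))}.
  by move=> a b ar br /sub_adj_drop_edge; apply: adj_drop_edge r_e ar br.
have q_s' :=
  connect_sub_avoid drop_e'_e (connect_far_endN q e'T) (connect_near_end e' q).
case/negP: (connect_far_endN q eT); rewrite far_ee'.
apply: connect_trans q_s' (connect1 _).
apply: adj_drop_edge s_e _ _ (adj_near_far q e'T); first by rewrite eq_sym.
by rewrite -far_ee' eq_sym near_far_neq.
Qed.

Lemma far_end_surj q r : q != r -> exists2 e, e \in T & far_end e q = r.
Proof.
move=> qr; have [_ [connected _]] := tree.
have [p0 [p0_path p0_last]] := connected q r.
move: p0_last; case: (shortenP p0_path) => p p_path p_uniq _.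
case/lastP: p p_path p_uniq => [|p t]; first by move=> _ _ /= rq; rewrite rq eqxx in qr.
rewrite last_rcons rcons_path -rcons_cons rcons_uniq.
move=> /andP[p_path adj_r] /andP[rNp _] <-.
have [e eT ends_e] : exists2 e, e \in T & ends e = [set last q p; t].
  move: adj_r => /orP[lt_T | tl_T]; first by exists (last q p, t).
  by exists (t, last q p) => //; rewrite /ends setUC.
have t_e : t \in ends e by rewrite ends_e !inE eqxx orbT.
have q_last : connect (adj (drop_edge e)) q (last q p).
  apply/connectP; exists p => //; apply: (sub_in_path (P := predC1 t)) p_path.
    by move=> a b aNt bNt /(adj_drop_edge t_e aNt bNt).
  by apply/allP => a a_p /=; apply: contraTneq a_p => ->.
exists e => //; apply/eqP; move: (far_end_in_ends e q); rewrite ends_e !inE.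
by case/orP=> // /eqP far_last; case/negP: (connect_far_endN q eT); rewrite far_last.
Qed.

Lemma big_far_end (V : Type) (idx : V) (op : Monoid.com_law idx)
    (F : 'I_m -> 'I_m -> V) :
  \big[op/idx]_(e <- T) \big[op/idx]_(q < m) F q (far_end e q) =
  \big[op/idx]_(y : 'I_m * 'I_m | y.1 != y.2) F y.1 y.2.
Proof.
rewrite big_uniq ?uniq_tree //= pair_big_dep /=.
pose S := [set x : edge m * 'I_m | x.1 \in T].
pose flip_far (x : edge m * 'I_m) := (x.2, far_end x.1 x.2).
rewrite (eq_bigl (mem S)); last by move=> x; rewrite !inE andbT.
have flip_far_inj : {in S &, injective flip_far}.
  by move=> [e q] [e' q'] /[!inE] /= eT e'T [<- /(far_end_inj eT e'T) ->].
have image_S : flip_far @: S = [set y | y.1 != y.2].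
  apply/setP => -[q r]; rewrite !inE.
  apply/imsetP/idP => [[[e q'] /[!inE] /= eT] | qr].
    case=> -> ->; apply: contraNneq (connect_far_endN q' eT) => /= <-.
    exact: connect0.
  have [e eT far_r] := far_end_surj qr.
  by exists (e, q); rewrite ?inE //= /flip_far far_r.
rewrite -(big_imset (fun y => F y.1 y.2) flip_far_inj) /= image_S.
by apply: eq_bigl => y; rewrite inE.
Qed.

End SpanningTree.

Lemma big_offdiag_pairs (V : Type) (idx : V) (op : Monoid.com_law idx) n
    (G : 'I_n -> 'I_n -> V) :
  \big[op/idx]_(y : 'I_n * 'I_n | y.1 != y.2) G y.1 y.2 =
  \big[op/idx]_(y : 'I_n * 'I_n | (y.1 < y.2)%N) op (G y.1 y.2) (G y.2 y.1).
Proof.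
rewrite big_split /= (bigID (fun y : 'I_n * 'I_n => (y.1 < y.2)%N)) /=.
congr (op _ _).
  by apply: eq_bigl => y; rewrite andb_idl // => lt12; rewrite neq_ltn lt12.
rewrite (reindex_inj (h := fun y : 'I_n * 'I_n => (y.2, y.1))) /=; last first.
  by move=> [a b] [a' b'] [-> ->].
by apply: eq_bigl => -[a b] /=; rewrite neq_ltn; case: ltngtP.
Qed.

Lemma cdist_ge0 (R : realType) (a b : R[i]) : 0 <= cdist a b.
Proof. by rewrite /cdist /Normc.normc; case: (a - b) => x y; rewrite sqrtr_ge0. Qed.

Lemma cdistC (R : realType) (a b : R[i]) : cdist a b = cdist b a.
Proof. by rewrite /cdist -normcN opprB. Qed.

Lemma plen_rcons (R : realType) m (z : 'I_m -> R[i]) x p r :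
  plen z x (rcons p r) = plen z x p + cdist (z (last x p)) (z r).
Proof. by rewrite /plen -cats1 pairmap_cat big_cat /= big_seq1. Qed.

Lemma dplus_near_far (R : realType) m (z : 'I_m -> R[i]) (T : seq (edge m))
    w e q :
  dplus z w e =
  Num.max (cdist w (z (near_end T e q))) (cdist w (z (far_end T e q))).
Proof. by rewrite /dplus /near_end /far_end; case: ifP => // _; apply: maxC. Qed.

Section FarEndBound.
Variables (R : realType) (m : nat) (c : R) (z : 'I_m -> R[i]) (T : seq (edge m)).
Hypotheses (c_ge1 : 1 <= c) (tree : spanning_tree T).
Hypothesis tree_path_len : forall (i j : 'I_m) (p : seq 'I_m),
  path (adj T) i p -> last i p = j -> uniq (i :: p) ->
  cdist (z i) (z j) <= plen z i p <= c * cdist (z i) (z j).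

Lemma dplus_le_far_end e q :
  e \in T -> dplus z (z q) e <= c * cdist (z q) (z (far_end T e q)).
Proof.
move=> eT; set r := far_end T e q.
have /connectP[p0 p0_path p0_last] := connect_near_end tree e q; move: p0_last.
case: (shortenP p0_path) => p p_path p_uniq _ s_last.
have rNp : r \notin q :: p.
  by apply: contra (connect_far_endN tree q eT) => /(path_connect p_path).
have pT_path := sub_path (@sub_adj_drop_edge _ T e) p_path.
have /andP[_ le_qr] :
    cdist (z q) (z r) <= plen z q (rcons p r) <= c * cdist (z q) (z r).
  apply: tree_path_len; rewrite ?last_rcons //.
    by rewrite rcons_path pT_path -s_last adj_near_far.
  by rewrite -rcons_cons rcons_uniq rNp.
have /andP[le_qs _] := tree_path_len pT_path (esym s_last) p_uniq.
rewrite (dplus_near_far z T _ _ q) ge_max -/r ler_peMl ?cdist_ge0 // andbT.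
by apply: (le_trans le_qs); apply: le_trans le_qr; rewrite plen_rcons lerDl cdist_ge0.
Qed.

End FarEndBound.

Theorem lemmaA5 (R : realType) (m : nat) (c : R) (hc : 1 <= c) :
  exists C : R, 0 < C /\
  forall (z : 'I_m -> R[i]) (T : seq (edge m)),
    spanning_tree T ->
    (forall (i j : 'I_m) (p : seq 'I_m),
        path (adj T) i p -> last i p = j -> uniq (i :: p) ->
        cdist (z i) (z j) <= plen z i p <= c * cdist (z i) (z j)) ->
    \prod_(e <- T) \prod_(q < m) Num.sqrt (dplus z (z q) e)
      <= C * \prod_(i < m) \prod_(j < m | (i < j)%N) cdist (z i) (z j).
Proof.
have c_gt0 : 0 < c by apply: lt_le_trans hc.
exists (\prod_(i < m) \prod_(j < m | (i < j)%N) c); split.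
  by apply: prodr_gt0 => i _; apply: prodr_gt0.
move=> z T tree tree_path_len.
pose F (q r : 'I_m) := Num.sqrt (c * cdist (z q) (z r)).
apply: (@le_trans _ _ (\prod_(e <- T) \prod_(q < m) F q (far_end T e q))).
  rewrite big_seq [leRHS]big_seq; apply: ler_prod => e eT.
  rewrite prodr_ge0 /=; last by move=> q _; apply: sqrtr_ge0.
  apply: ler_prod => q _; rewrite sqrtr_ge0 ler_wsqrtr //.
  exact: dplus_le_far_end.
rewrite (big_far_end tree) big_offdiag_pairs /= !pair_big_dep -big_split /=.
under eq_bigr => y _ do
  rewrite /F [cdist (z y.2) _]cdistC -expr2 sqr_sqrtr ?mulr_ge0 ?cdist_ge0 ?ltW //.
exact: lexx.
Qed.
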